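(* Let $p=1$, $C_{\mathcal Y}>0$, and suppose there exist $x_1,x_2,x_3\in\mathcal X$ with $d_{\mathcal X}(x_3,x_1)=d_{\mathcal X}(x_3,x_2)=C_{\mathcal X}$ and $y_1\in\mathcal Y$ with $d_{\mathcal Y}(y_0,y_1)=C_{\mathcal Y}$. Let $\tilde d$ be defined by the GOSPA2 formula with $p=1$ but with penalty $C_2=C_{\mathcal X}+\frac12C_{\mathcal Y}$. Consider the graphs $G_1=([1],v,e)$ with $v_1=x_3$; $G_2=([2],w,f)$ with $w_1=x_1,w_2=x_2$, $f_{12}=f_{21}=y_1$ and $f_{ij}=y_0$ otherwise; $G_3=([3],u,g)$ with $u_i=x_i$ ($i\in[3]$), $g_{12}=g_{21}=y_1$ and $g_{ij}=y_0$ otherwise. Then $\tilde d(G_1,G_2)=C_2+\frac14C_{\mathcal Y}$ while $\tilde d(G_1,G_3)+\tilde d(G_3,G_2)\le C_2+\frac16C_{\mathcal Y}$; in particular $\tilde d$ violates the triangle inequality.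
   Context: Let $(\mathcal X,d_{\mathcal X})$ and $(\mathcal Y,d_{\mathcal Y})$ be pseudometric spaces with $\mathrm{diam}(\mathcal X)\le C_{\mathcal X}$, $\mathrm{diam}(\mathcal Y)\le C_{\mathcal Y}$, with a distinguished element $y_0\in\mathcal Y$ meaning ''no edge''. For $n\in\mathbb N_0$ write $[n]=\{1,\dots,n\}$ and $S_n$ for the permutations of $[n]$. An attributed simple graph is a triple $([n],v,e)$ with $v:[n]\to\mathcal X$ and $e:[n]^2\to\mathcal Y$ symmetric with $e(i,i)=y_0$; write $v_i=v(i)$, $e_{ii'}=e(i,i')$. The GOSPA2 formula with order $p$ and penalty $C_2$: for $([m],v,e),([n],w,f)$ with $n\ge\max\{m,1\}$ (otherwise swap), with $0/0:=0$, $$\frac{1}{n^{1/p}}\min_{\pi\in S_n}\Big[(n-m)C_2^p+\sum_{i\in[m]}d_{\mathcal X}(v_i,w_{\pi(i)})^p+\frac12\frac1{n-1}\Big(\sum_{(i,i')\in[m]^2}d_{\mathcal Y}(e_{ii'},f_{\pi(i)\pi(i')})^p+\sum_{(i,i')\in[n]^2\setminus[m]^2}d_{\mathcal Y}(y_0,f_{\pi(i)\pi(i')})^p\Big)\Big]^{1/p}.$$ *)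

From HB Require Import structures.
From mathcomp Require Import all_boot all_order all_algebra all_fingroup.
From mathcomp Require Import reals exp.
Set Implicit Arguments. Unset Strict Implicit. Unset Printing Implicit Defensive.
Import Order.TTheory GRing.Theory Num.Theory.
Local Open Scope ring_scope.

(* An attributed graph on vertex set {0,...,gsize-1} (0-based version of [n]);
   values of gv / ge outside this range are irrelevant. *)
Record agraph (X Y : Type) := AGraph {
  gsize : nat;
  gv : nat -> X;
  ge : nat -> nat -> Y }.

Definition is_simple_agraph (X Y : Type) (y0 : Y) (G : agraph X Y) : Prop :=
  (forall i j, (i < gsize G)%N -> (j < gsize G)%N -> ge G i j = ge G j i) /\
  (forall i, (i < gsize G)%N -> ge G i i = y0).

Section Gospa.
Variables (R : realType) (X Y : Type).

(* cost of permutation s : 'S_n, graphs G (m vertices) and H (n vertices), m <= n *)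
Definition gospa2_cost (p C2 : R) (dX : X -> X -> R) (dY : Y -> Y -> R) (y0 : Y)
  (G H : agraph X Y) (n : nat) (s : 'S_n) : R :=
  let m := gsize G in
  (n - m)%:R * C2 `^ p
  + (\sum_(i < n | (i < m)%N) dX (gv G i) (gv H (s i)) `^ p)
  + 2^-1 * (n.-1%:R)^-1 *
    (\sum_(i < n) \sum_(i' < n)
        (if (i < m)%N && (i' < m)%N
         then dY (ge G i i') (ge H (s i) (s i')) `^ p
         else dY y0 (ge H (s i) (s i')) `^ p)).
(* Note: in MathComp 0^-1 = 0, which realizes the convention 0/0 := 0 *)

Definition gospa2_core (p C2 : R) dX dY (y0 : Y) (G H : agraph X Y) : R :=
  let n := gsize H in
  if n == 0%N then 0 else
  (n%:R `^ p^-1)^-1 *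
  (\big[Num.min/gospa2_cost p C2 dX dY y0 G H (1 : 'S_n)]_(s : 'S_n)
      gospa2_cost p C2 dX dY y0 G H s) `^ p^-1.

Definition gospa2 (p C2 : R) dX dY (y0 : Y) (G H : agraph X Y) : R :=
  if (gsize G <= gsize H)%N then gospa2_core p C2 dX dY y0 G H
  else gospa2_core p C2 dX dY y0 H G.
End Gospa.

(* the three graphs of the statement (0-based: vertex k here is vertex k+1) *)
Definition edge12 (Y : Type) (y0 y1 : Y) (i j : nat) : Y :=
  if ((i == 0) && (j == 1)) || ((i == 1) && (j == 0)) then y1 else y0.

Definition graphG1 (X Y : Type) (x3 : X) (y0 : Y) : agraph X Y :=
  AGraph 1 (fun _ => x3) (fun _ _ => y0).

Definition graphG2 (X Y : Type) (x1 x2 : X) (y0 y1 : Y) : agraph X Y :=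
  AGraph 2 (fun i => if i == 0 then x1 else x2) (edge12 y0 y1).

Definition graphG3 (X Y : Type) (x1 x2 x3 : X) (y0 y1 : Y) : agraph X Y :=
  AGraph 3 (fun i => if i == 0 then x1 else if i == 1 then x2 else x3)
    (edge12 y0 y1).

Definition is_pseudometric (R : realType) (T : Type) (d : T -> T -> R) : Prop :=
  (forall a, d a a = 0) /\ (forall a b, d a b = d b a) /\
  (forall a b c, d a c <= d a b + d b c).

From HB Require Import structures.
From mathcomp Require Import all_boot all_order all_algebra all_fingroup.
From mathcomp Require Import reals exp.
From mathcomp Require Import lra.
Import Order.TTheory GRing.Theory Num.Theory.
Local Open Scope ring_scope.

(* For p = 1 the formula is simply (1/n) times the minimum over 'S_n of the
   matching cost, so the proof only needs:
   - generic facts on minima over permutations and on the cost (it is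
     nonnegative, and its edge term does not depend on the permutation when
     the smaller graph has no edges);
   - the value of the cost for the three pairs of graphs: every matching of
     G1 into G2 costs C2 + CX + CY, the matching of G1 onto the isolated
     vertex of G3 costs 2 C2 + CY/2, and the identity matching of G2 into
     G3 costs C2.
   Hence d(G1,G2) = (C2 + CX + CY)/2 = C2 + CY/4, whereas
   d(G1,G3) + d(G3,G2) <= (2 C2 + CY/2)/3 + C2/3 = C2 + CY/6. *)

Section FiniteMinimum.
Context {R : realType} {I : finType}.

Lemma big_min_le (c : R) (F : I -> R) (i0 : I) :
  \big[Num.min/c]_(i : I) F i <= F i0.
Proof. by rewrite (bigD1 i0) //= ge_min lexx. Qed.

Lemma big_min_ge0 (c : R) (F : I -> R) :
  0 <= c -> (forall i, 0 <= F i) -> 0 <= \big[Num.min/c]_(i : I) F i.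
Proof.
move=> c_ge0 F_ge0; apply: (big_ind (fun x => 0 <= x)) => // x y x_ge0 y_ge0.
by rewrite le_min x_ge0 y_ge0.
Qed.

Lemma big_min_const (c : R) (F : I -> R) :
  (forall i, F i = c) -> \big[Num.min/c]_(i : I) F i = c.
Proof.
by move=> Fc; apply: (big_ind (fun x => x = c)) => // x y -> ->; rewrite minxx.
Qed.

End FiniteMinimum.

Lemma pseudometric_ge0 (R : realType) (T : Type) (d : T -> T -> R) :
  is_pseudometric d -> forall a b, 0 <= d a b.
Proof.
by case=> d_refl [d_sym d_tri] a b; have := d_tri a b a; rewrite d_refl d_sym; lra.
Qed.

Lemma sum_pairs_perm {R : realType} {n : nat} (s : 'S_n) (F : 'I_n -> 'I_n -> R) :
  \sum_i \sum_j F (s i) (s j) = \sum_i \sum_j F i j.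
Proof.
rewrite [RHS](reindex_inj (@perm_inj _ s)) /=.
by apply: eq_bigr => i _; rewrite [RHS](reindex_inj (@perm_inj _ s)).
Qed.

Lemma sum_edge12 (R : realType) (Y : Type) (y0 y1 : Y) (g : Y -> R) (k : nat) :
  g y0 = 0 -> \sum_(i < k.+2) \sum_(j < k.+2) g (edge12 y0 y1 i j) = g y1 *+ 2.
Proof.
move=> g0.
have row i : \sum_(j < k.+2) g (edge12 y0 y1 i j) =
             g (edge12 y0 y1 i 0) + g (edge12 y0 y1 i 1).
  rewrite big_ord_recl [X in _ + X]big_ord_recl big1 ?addr0 // => j _.
  by rewrite /edge12 /bump /= !andbF g0.
rewrite big_ord_recl [X in _ + X]big_ord_recl [X in _ + (_ + X)]big1 => [|i _].
  by rewrite !row /edge12 /bump /= g0 !addr0 add0r mulr2n.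
by rewrite row /edge12 /bump /= g0 addr0.
Qed.

Section GospaCost.
Variables (R : realType) (X Y : Type) (C2 : R) (dX : X -> X -> R)
  (dY : Y -> Y -> R) (y0 : Y).

Lemma gospa2_cost_ge0 (p : R) (G H : agraph X Y) (n : nat) (s : 'S_n) :
  0 <= C2 -> 0 <= gospa2_cost p C2 dX dY y0 G H s.
Proof.
move=> C2_ge0; rewrite /gospa2_cost.
apply: addr_ge0; first apply: addr_ge0.
- by apply: mulr_ge0; [apply: ler0n | apply: powR_ge0].
- by apply: sumr_ge0 => i _; apply: powR_ge0.
- apply: mulr_ge0; first by apply: mulr_ge0; rewrite invr_ge0 ?ler0n.
  by apply: sumr_ge0 => i _; apply: sumr_ge0 => j _; case: ifP => _; apply: powR_ge0.
Qed.

Lemma gospa2_core_p1 (G H : agraph X Y) : 0 <= C2 ->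
  gospa2_core 1 C2 dX dY y0 G H =
  (gsize H)%:R^-1 *
    \big[Num.min/gospa2_cost 1 C2 dX dY y0 G H (1 : 'S_(gsize H))]_(s : 'S_(gsize H))
       gospa2_cost 1 C2 dX dY y0 G H s.
Proof.
move=> C2_ge0; rewrite /gospa2_core invr1 powRr1 ?ler0n // powRr1; last first.
  by apply: big_min_ge0 => [|s]; apply: gospa2_cost_ge0.
by case: eqP => [-> | //]; rewrite invr0 mul0r.
Qed.

(* When the smaller graph has no edges, every pair of matched vertices is
   compared with "no edge", so the edge term of the cost forgets the
   permutation. *)
Lemma edge_term_edgeless (p : R) (G H : agraph X Y) (n : nat) (s : 'S_n) :
  (forall i j, ge G i j = y0) ->
  \sum_(i < n) \sum_(i' < n)
     (if (i < gsize G)%N && (i' < gsize G)%N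
      then dY (ge G i i') (ge H (s i) (s i')) `^ p
      else dY y0 (ge H (s i) (s i')) `^ p)
  = \sum_(i < n) \sum_(i' < n) dY y0 (ge H i i') `^ p.
Proof.
move=> G_edgeless; rewrite -(sum_pairs_perm s (fun i i' => dY y0 (ge H i i') `^ p)).
by apply: eq_bigr => i _; apply: eq_bigr => i' _; rewrite G_edgeless if_same.
Qed.

End GospaCost.

Section ExampleCosts.
Context {R : realType} {X Y : Type} {dX : X -> X -> R} {dY : Y -> Y -> R}
  {C2 CX CY : R} {y0 : Y} {x1 x2 x3 : X} {y1 : Y}.
Hypotheses (hdX : is_pseudometric dX) (hdY : is_pseudometric dY) (C2_ge0 : 0 <= C2)
  (h31 : dX x3 x1 = CX) (h32 : dX x3 x2 = CX) (h01 : dY y0 y1 = CY).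

Let dX_p1 a b : dX a b `^ 1 = dX a b.
Proof. exact/powRr1/pseudometric_ge0. Qed.

Let dY_p1 a b : dY a b `^ 1 = dY a b.
Proof. exact/powRr1/pseudometric_ge0. Qed.

Let dX_refl a : dX a a = 0. Proof. by case: hdX. Qed.
Let dY_refl a : dY a a = 0. Proof. by case: hdY. Qed.

Let edge12_term (k : nat) :
  \sum_(i < k.+2) \sum_(j < k.+2) dY y0 (edge12 y0 y1 i j) `^ 1 = 2 * CY.
Proof.
rewrite (@sum_edge12 _ _ y0 y1 (fun y => dY y0 y `^ 1)) ?dY_p1 ?dY_refl //.
by rewrite h01 mulr_natl.
Qed.

(* Matching G1 into G2: the vertex x3 is at distance CX from both x1 and
   x2, one vertex is unmatched, and the edge of G2 is missing. *)
Lemma cost_G1_G2 (s : 'S_2) :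
  gospa2_cost 1 C2 dX dY y0 (graphG1 x3 y0) (graphG2 x1 x2 y0 y1) s = C2 + CX + CY.
Proof.
rewrite /gospa2_cost edge_term_edgeless //= edge12_term powRr1 //.
rewrite big_mkcond /= !big_ord_recr big_ord0 /= dX_p1 invr1 mulr1.
rewrite -[(2 - 1)%N]/1%N; case: ifP => _; rewrite ?h31 ?h32; lra.
Qed.

Lemma cost_G1_G3 :
  gospa2_cost 1 C2 dX dY y0 (graphG1 x3 y0) (graphG3 x1 x2 x3 y0 y1)
    (tperm (ord0 : 'I_3) ord_max) = 2 * C2 + 2^-1 * CY.
Proof.
rewrite /gospa2_cost edge_term_edgeless //= edge12_term powRr1 //.
rewrite big_mkcond /= !big_ord_recr big_ord0 /= permE /= dX_p1 dX_refl.
by rewrite -[(3 - 1)%N]/2%N; lra.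
Qed.

(* G2 is an induced subgraph of G3, so the identity matching only pays the
   penalty for the extra vertex. *)
Lemma cost_G2_G3 :
  gospa2_cost 1 C2 dX dY y0 (graphG2 x1 x2 y0 y1) (graphG3 x1 x2 x3 y0 y1)
    (1 : 'S_3) = C2.
Proof.
rewrite /gospa2_cost /= !big_mkcond /= !big_ord_recr !big_ord0 /= !perm1 /=.
rewrite /edge12 /= !dY_p1 !dX_p1 !dY_refl !dX_refl powRr1 //.
by rewrite -[(3 - 2)%N]/1%N; lra.
Qed.

End ExampleCosts.

Theorem mainTheorem10 (R : realType) (X Y : Type)
  (dX : X -> X -> R) (dY : Y -> Y -> R) (CX CY : R) (y0 : Y)
  (hdX : is_pseudometric dX) (hdY : is_pseudometric dY)
  (hdiamX : forall a b, dX a b <= CX) (hdiamY : forall a b, dY a b <= CY)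
  (hCY : 0 < CY)
  (x1 x2 x3 : X) (y1 : Y)
  (h31 : dX x3 x1 = CX) (h32 : dX x3 x2 = CX) (h01 : dY y0 y1 = CY) :
  let C2 := CX + 2^-1 * CY in
  let dt := gospa2 1 C2 dX dY y0 in
  let G1 := graphG1 x3 y0 in
  let G2 := graphG2 x1 x2 y0 y1 in
  let G3 := graphG3 x1 x2 x3 y0 y1 in
  [/\ dt G1 G2 = C2 + 4^-1 * CY,
      dt G1 G3 + dt G3 G2 <= C2 + 6^-1 * CY
    & dt G1 G3 + dt G3 G2 < dt G1 G2].
Proof.
move=> C2 dt G1 G2 G3.
have CX_ge0 : 0 <= CX by rewrite -h31; apply: pseudometric_ge0.
have C2_ge0 : 0 <= C2 by rewrite /C2; lra.
have d12 : dt G1 G2 = 2^-1 * (C2 + CX + CY).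
  have cost12 := cost_G1_G2 (x1:=x1) hdX hdY C2_ge0 h31 h32 h01.
  by rewrite /dt /gospa2 /= gospa2_core_p1 //= cost12 big_min_const.
have d13 : dt G1 G3 <= 3^-1 * (2 * C2 + 2^-1 * CY).
  rewrite /dt /gospa2 /= gospa2_core_p1 //= ler_pM2l ?invr_gt0 ?ltr0n //.
  apply: le_trans (big_min_le _ _ (tperm (ord0 : 'I_3) ord_max)) _.
  by rewrite (cost_G1_G3 (x1:=x1) (x2:=x2) hdX hdY C2_ge0 h01).
have d32 : dt G3 G2 <= 3^-1 * C2.
  rewrite /dt /gospa2 /= gospa2_core_p1 //= ler_pM2l ?invr_gt0 ?ltr0n //.
  apply: le_trans (big_min_le _ _ 1%g) _.
  by rewrite (cost_G2_G3 (x1:=x1) (x2:=x2) (x3:=x3) (y0:=y0) (y1:=y1) hdX hdY C2_ge0).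
rewrite d12 /C2 in d13 d32 *; move: (dt G1 G3) (dt G3 G2) d13 d32 => a b ha hb.
by split; lra.
Qed.
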